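(* Let $f\in\mathbb{R}[X_1,\dots,X_n]$ be a form (homogeneous polynomial) of degree $2d$. Suppose there exist nonnegative real numbers $a_{\alpha,i}$, for $\alpha\in\Delta$ and $i=1,\dots,n$, such that, writing $a_\alpha:=(a_{\alpha,1},\dots,a_{\alpha,n})$, (1) for every $\alpha\in\Delta$: $(2d)^{2d}a_{\alpha}^{\alpha}=f_{\alpha}^{2d}\alpha^{\alpha}$; and (2) $f_{2d,i}\ge\sum_{\alpha\in\Delta}a_{\alpha,i}$ for $i=1,\dots,n$. Then $f$ is SOBS.
   Context: $\mathbb{N}=\{0,1,2,\dots\}$, $n\ge1$, $\underline{X}=(X_1,\dots,X_n)$. For $\alpha\in\mathbb{N}^n$ write $\underline{X}^\alpha=X_1^{\alpha_1}\cdots X_n^{\alpha_n}$, $|\alpha|=\alpha_1+\cdots+\alpha_n$, and for $a=(a_1,\dots,a_n)\in\mathbb{R}^n$ write $a^\alpha=\prod_{i=1}^n a_i^{\alpha_i}$ with the convention $0^0=1$ (so $\alpha^\alpha=\prod_i\alpha_i^{\alpha_i}$). For $f=\sum_\alpha f_\alpha\underline{X}^\alpha$ of degree $2d$, let $\epsilon_i$ be the $i$-th standard unit vector, $f_{2d,i}:=f_{2d\epsilon_i}$ (the coefficient of $X_i^{2d}$), $\Omega=\{\alpha\in\mathbb{N}^n: f_\alpha\ne0\}\setminus\{\underline{0},2d\epsilon_1,\dots,2d\epsilon_n\}$, and $\Delta=\{\alpha\in\Omega:\ f_\alpha<0\text{ or }\alpha_i\text{ is odd for some }i\}$ (the $\alpha\in\Omega$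 for which $f_\alpha\underline{X}^\alpha$ is not a square). A polynomial is SOBS (a sum of binomial squares) if it is a finite sum of squares of polynomials of the form $a\underline{X}^\alpha-b\underline{X}^\beta$ with $a,b\in\mathbb{R}$, $\alpha,\beta\in\mathbb{N}^n$. *)

From HB Require Import structures.
From mathcomp Require Import all_boot all_order all_algebra.
From mathcomp Require Import reals.
From mathcomp.multinomials Require Import mpoly.
Set Implicit Arguments. Unset Strict Implicit. Unset Printing Implicit Defensive.
Import Order.TTheory GRing.Theory Num.Theory.
Local Open Scope ring_scope.

Section Defs.
Variables (R : realType) (n : nat).

Definition mnm_pow (i : 'I_n) (k : nat) : 'X_{1..n} :=
  [multinom (if j == i then k else 0%N) | j < n].

(** a^alpha = prod_i a_i^(alpha_i)  (with 0^0 = 1, as for [^+]). *)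
Definition vpow (a : 'I_n -> R) (alpha : 'X_{1..n}) : R :=
  \prod_(i < n) a i ^+ alpha i.

(** alpha^alpha = prod_i alpha_i^(alpha_i)  (with 0^0 = 1). *)
Definition mnm_selfpow (alpha : 'X_{1..n}) : R :=
  \prod_(i < n) (alpha i)%:R ^+ alpha i.

Definition in_Omega (f : {mpoly R[n]}) (d : nat) (alpha : 'X_{1..n}) : bool :=
  [&& f@_alpha != 0, alpha != 0%MM & [forall i, alpha != mnm_pow i (2 * d)]].

(** Delta: those alpha in Omega with f_alpha < 0 or some alpha_i odd.
    Given as the (duplicate-free) sublist of the support of f. *)
Definition Delta (f : {mpoly R[n]}) (d : nat) : seq 'X_{1..n} :=
  [seq alpha <- msupp f | in_Omega f d alpha &&
     ((f@_alpha < 0) || [exists i, odd (alpha i)])].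

Definition SOBS (p : {mpoly R[n]}) : Prop :=
  exists s : seq (R * R * 'X_{1..n} * 'X_{1..n}),
    p = \sum_(t <- s) (t.1.1.1 *: 'X_[t.1.2] - t.1.1.2 *: 'X_[t.2]) ^+ 2.

End Defs.

From HB Require Import structures.
From mathcomp Require Import all_boot all_order all_algebra.
From mathcomp Require Import reals.
From mathcomp.multinomials Require Import mpoly.
From mathcomp Require Import ring zify.
Set Implicit Arguments. Unset Strict Implicit. Unset Printing Implicit Defensive.
Import Order.TTheory GRing.Theory Num.Theory.
Local Open Scope ring_scope.

(* For alpha in Delta, condition (1) allows rescaling X_i by weights r_i with
   prod_i r_i^alpha_i = 1 (and flipping signs of some X_i so that the coefficient
   of X^alpha becomes negative), which turns f_alpha X^alpha + sum_i a_alpha,i X_i^2d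
   into a positive multiple of the AM-GM form sum_i alpha_i Y_i^2d - 2d prod_i
   Y_i^alpha_i in the monomials Y_i = +-r_i X_i.  Following Hurwitz, such forms are
   sums of binomial squares: merging weights two at a time reduces to two
   monomials Y, Z, where c |-> (Y^c Z^(S-c))^2 has square second differences.
   Condition (2) leaves nonnegative multiples of the X_i^2d, and every other
   monomial of f lies outside Delta, so it is even with a positive coefficient. *)

Lemma big_off2 (I : finType) (T : Type) (idx : T) (op : Monoid.com_law idx)
    (F G : I -> T) (i j : I) :
  i != j -> (forall k, k != i -> k != j -> F k = G k) ->
  \big[op/idx]_k F k = op (op (F i) (F j)) (\big[op/idx]_(k | (k != i) && (k != j)) G k).
Proof.
move=> ij FG; rewrite (bigD1 i) //= (bigD1 j) //=; last by rewrite eq_sym.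
rewrite Monoid.mulmA; congr (op _ _); apply: eq_bigr => k /andP[ki kj].
exact: FG.
Qed.

Lemma exists_root (R : rcfType) (x : R) k : 0 <= x -> (0 < k)%N ->
  exists2 y, 0 <= y & y ^+ k = x.
Proof.
move=> x0 k0; have [||y /andP[y0 _]] := @poly_ivt R ('X^k - x%:P) 0 (1 + x).
- by rewrite addr_ge0.
- rewrite !hornerE expr0n -(prednK k0) /= sub0r oppr_le0 x0 /= subr_ge0 prednK //.
  by rewrite (le_trans _ (ler_eXnr _ _)) // ?lerDr ?lerDl.
- by rewrite /root !hornerE subr_eq0 => /eqP; exists y.
Qed.

Section SOBS.
Variables (R : realType) (n : nat).
Local Notation P := {mpoly R[n]}.

Definition monomial (p : P) : Prop := exists (c : R) (u : 'X_{1..n}), p = c *: 'X_[u].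

Lemma monomial1 : monomial 1. Proof. by exists 1, 0%MM; rewrite scale1r mpolyX0. Qed.

Lemma monomialZX c u : monomial (c *: 'X_[u]). Proof. by exists c, u. Qed.

Lemma monomialM p q : monomial p -> monomial q -> monomial (p * q).
Proof.
case=> e [u ->] [e' [u' ->]]; exists (e * e'), (u + u')%MM.
by rewrite -scalerAl -scalerAr scalerA mpolyXD.
Qed.

Lemma monomialX p k : monomial p -> monomial (p ^+ k).
Proof.
move=> mp; elim: k => [|k IH]; first by rewrite expr0; exact: monomial1.
by rewrite exprS; apply: monomialM.
Qed.

Lemma monomial_prod (I : Type) (r : seq I) (Pr : pred I) (F : I -> P) :
  (forall i, monomial (F i)) -> monomial (\prod_(i <- r | Pr i) F i).
Proof. by move=> mF; apply: big_ind => //; [exact: monomial1 | exact: monomialM]. Qed.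

Lemma SOBS0 : SOBS (0 : P). Proof. by exists [::]; rewrite big_nil. Qed.

Lemma SOBSD p q : SOBS p -> SOBS q -> SOBS (p + q :> P).
Proof. by case=> s -> [t ->]; exists (s ++ t); rewrite big_cat. Qed.

Lemma SOBS_sum (I : Type) (r : seq I) (Pr : pred I) (F : I -> P) :
  (forall i, Pr i -> SOBS (F i)) -> SOBS (\sum_(i <- r | Pr i) F i).
Proof. by move=> sF; apply: big_ind => //; [exact: SOBS0 | exact: SOBSD]. Qed.

Lemma SOBSMn p k : SOBS p -> SOBS (p *+ k :> P).
Proof.
move=> sp; elim: k => [|k IH]; first by rewrite mulr0n; exact: SOBS0.
by rewrite mulrS; apply: SOBSD.
Qed.

Lemma SOBSZ c p : 0 <= c -> SOBS p -> SOBS (c *: p :> P).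
Proof.
move=> c0 [s ->].
exists [seq (Num.sqrt c * t.1.1.1, Num.sqrt c * t.1.1.2, t.1.2, t.2) | t <- s].
rewrite big_map scaler_sumr; apply: eq_bigr => t _ /=.
by rewrite -[c in LHS](sqr_sqrtr c0) -exprZn scalerBr !scalerA.
Qed.

Lemma SOBS_Mn_inv p k : (0 < k)%N -> SOBS (p *+ k :> P) -> SOBS p.
Proof.
move=> k0 sp; have k0' : (k%:R : R) != 0 by rewrite pnatr_eq0 -lt0n.
have -> : p = k%:R^-1 *: (p *+ k) by rewrite -scaler_nat scalerA mulVf // scale1r.
by apply: SOBSZ => //; rewrite invr_ge0 ler0n.
Qed.

Lemma SOBS_sqrB p q : monomial p -> monomial q -> SOBS ((p - q) ^+ 2).
Proof. by case=> a [u ->] [b [v ->]]; exists [:: (a, b, u, v)]; rewrite big_seq1. Qed.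

Lemma SOBSM_sqr p r : monomial r -> SOBS p -> SOBS (p * r ^+ 2).
Proof.
case=> e [w ->] [s ->].
exists [seq (t.1.1.1 * e, t.1.1.2 * e, (t.1.2 + w)%MM, (t.2 + w)%MM) | t <- s].
rewrite big_map mulr_suml; apply: eq_bigr => t _ /=.
by rewrite -exprMn mulrBl -!scalerAl -!scalerAr !scalerA -!mpolyXD.
Qed.

Lemma SOBSZX_even (c : R) (u : 'X_{1..n}) :
  0 <= c -> (forall i, ~~ odd (u i)) -> SOBS (c *: 'X_[u] : P).
Proof.
move=> c0 ev; pose h := [multinom (u i)./2 | i < n].
have -> : u = (h + h)%MM.
  apply/mnmP => i; rewrite mnmDE mnmE addnn.
  by move: (odd_double_half (u i)); rewrite (negbTE (ev i)).
have := SOBS_sqrB (monomialZX (Num.sqrt c) h) (monomialZX 0 h).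
by rewrite scale0r subr0 exprZn sqr_sqrtr // expr2 -mpolyXD.
Qed.

Definition amgm2_seq (Y Z : P) (S c : nat) : P := (Y ^+ c * Z ^+ (S - c)) ^+ 2.
Definition amgm2_diff (Y Z : P) (S c : nat) : P := amgm2_seq Y Z S c.+1 - amgm2_seq Y Z S c.

Section TwoMonomials.
Variables (Y Z : P) (S : nat).
Hypotheses (mY : monomial Y) (mZ : monomial Z).
Local Notation e := (amgm2_seq Y Z S).
Local Notation D := (amgm2_diff Y Z S).

Lemma SOBS_amgm2_diff2 c : (c.+2 <= S)%N -> SOBS (D c.+1 - D c).
Proof.
move=> /subnK <-; set k := (S - c.+2)%N; rewrite /amgm2_diff /amgm2_seq.
have -> : (k + c.+2 - c.+2 = k)%N by lia.
have -> : (k + c.+2 - c.+1 = k.+1)%N by lia.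
have -> : (k + c.+2 - c = k.+2)%N by lia.
have -> : (Y ^+ c.+2 * Z ^+ k) ^+ 2 - (Y ^+ c.+1 * Z ^+ k.+1) ^+ 2 -
   ((Y ^+ c.+1 * Z ^+ k.+1) ^+ 2 - (Y ^+ c * Z ^+ k.+2) ^+ 2) =
   (Y ^+ c.+2 * Z ^+ k - Y ^+ c * Z ^+ k.+2) ^+ 2 by rewrite !exprS; ring.
by apply: SOBS_sqrB; apply: monomialM; apply: monomialX.
Qed.

Lemma SOBS_amgm2_diff_mono c k : ((c + k).+1 <= S)%N -> SOBS (D (c + k) - D c).
Proof.
elim: k => [|k IH] hS; first by rewrite addn0 subrr; exact: SOBS0.
rewrite addnS -[X in X - _](subrK (D (c + k))) -addrA; apply: SOBSD.
  by apply: SOBS_amgm2_diff2; rewrite -addnS.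
by apply: IH; apply: leq_trans hS; rewrite ltnS addnS.
Qed.

Lemma SOBS_amgm2_seq p : (p <= S)%N -> SOBS (e S *+ p + e 0 *+ (S - p) - e p *+ S).
Proof.
move=> pS; have [->|p0] := posnP p.
  by rewrite subn0 mulr0n add0r subrr; exact: SOBS0.
have [->|ltpS] := eqVneq p S; first by rewrite subnn mulr0n addr0 subrr; exact: SOBS0.
have {}ltpS : (p < S)%N by rewrite ltn_neqAle ltpS.
set A := \sum_(0 <= c < p) (D p.-1 - D c).
set B := \sum_(p <= c < S) (D c - D p.-1).
have sA : SOBS A.
  rewrite /A big_seq; apply: SOBS_sum => c; rewrite mem_index_iota => /andP[_ cp].
  by have := @SOBS_amgm2_diff_mono c (p.-1 - c); rewrite subnKC; [apply|]; lia.
have sB : SOBS B.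
  rewrite /B big_seq; apply: SOBS_sum => c; rewrite mem_index_iota => /andP[pc cS].
  by have := @SOBS_amgm2_diff_mono p.-1 (c - p.-1); rewrite subnKC; [apply|]; lia.
have eA : A = D p.-1 *+ p - (e p - e 0).
  by rewrite /A sumrB sumr_const_nat subn0 telescope_sumr.
have eB : B = (e S - e p) - D p.-1 *+ (S - p).
  by rewrite /B sumrB sumr_const_nat telescope_sumr // ltnW.
have -> : e S *+ p + e 0 *+ (S - p) - e p *+ S = A *+ (S - p) + B *+ p.
  rewrite eA eB; move: (subnK (ltnW ltpS)); set r := (S - p)%N => <-.
  by rewrite mulrnDr; ring.
by apply: SOBSD; apply: SOBSMn.
Qed.

Lemma SOBS_amgm2 p : (p <= S)%N ->
  SOBS ((Y ^+ S) ^+ 2 *+ p + (Z ^+ S) ^+ 2 *+ (S - p) - (Y ^+ p * Z ^+ (S - p)) ^+ 2 *+ S).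
Proof.
by move=> /SOBS_amgm2_seq; rewrite /amgm2_seq subnn subn0 !expr0 mulr1 mul1r.
Qed.

End TwoMonomials.

Definition amgm_gap (Y : 'I_n -> P) (b : 'I_n -> nat) : P :=
  \sum_i (Y i ^+ (\sum_k b k)) ^+ 2 *+ b i - (\prod_i Y i ^+ b i) ^+ 2 *+ (\sum_k b k).

Local Notation supp b := [set k | b k != 0%N].

Definition merge_weight (b : 'I_n -> nat) (i j : 'I_n) : 'I_n -> nat :=
  fun k => if k == j then 0%N else if k == i then (b i + b j)%N else b k.

Section MergeWeight.
Variables (b : 'I_n -> nat) (i j : 'I_n).
Hypothesis ij : i != j.

Lemma merge_weight_i : merge_weight b i j i = (b i + b j)%N.
Proof. by rewrite /merge_weight (negbTE ij) eqxx. Qed.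

Lemma merge_weight_j : merge_weight b i j j = 0%N.
Proof. by rewrite /merge_weight eqxx. Qed.

Lemma merge_weight_off k : k != i -> k != j -> merge_weight b i j k = b k.
Proof. by rewrite /merge_weight => /negbTE-> /negbTE->. Qed.

Lemma sum_merge_weight : (\sum_k merge_weight b i j k = \sum_k b k)%N.
Proof.
rewrite (big_off2 _ ij merge_weight_off) (big_off2 _ ij (fun _ _ _ => erefl)).
by rewrite merge_weight_i merge_weight_j /= addn0.
Qed.

Lemma supp_merge_weight : b i != 0%N -> supp (merge_weight b i j) = supp b :\ j.
Proof.
move=> bi0; apply/setP => k; rewrite !inE /merge_weight.
case: (eqVneq k j) => //= _; case: (eqVneq k i) => // ->.
by rewrite addn_eq0 (negbTE bi0).
Qed.

End MergeWeight.

Lemma amgm_gap_supp_le1 Y b : (#|supp b| <= 1)%N -> amgm_gap Y b = 0.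
Proof.
move=> supp1; rewrite /amgm_gap; case: (pickP (fun k => b k != 0%N)) => [k bk|b0].
  have bk' k' : k' != k -> b k' = 0%N.
    move=> k'k; apply/eqP; apply: contraNT k'k => bk'; apply/eqP.
    by apply/(card_le1_eqP supp1); rewrite inE.
  have m : (\sum_l b l = b k)%N by rewrite (bigD1 k) //= big1 ?addn0.
  rewrite m (bigD1 k) //= big1 ?addr0 => [|l /bk'->]; last by rewrite mulr0n.
  by rewrite (bigD1 k) //= big1 ?mulr1 ?subrr => [|l /bk'->].
have b0' k : b k = 0%N by apply/eqP; rewrite -[_ == _]negbK b0.
have -> : (\sum_l b l = 0)%N by rewrite big1.
by rewrite mulr0n subr0 big1 // => l _; rewrite b0'.
Qed.

Lemma amgm_gap_merge Y b i j : i != j ->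
  amgm_gap Y b *+ (b i + b j) =
    amgm_gap Y (merge_weight b i j) *+ b i + amgm_gap Y (merge_weight b j i) *+ b j +
    (((Y i ^+ (b i + b j)) ^+ 2 *+ b i + (Y j ^+ (b i + b j)) ^+ 2 *+ b j
        - (Y i ^+ b i * Y j ^+ b j) ^+ 2 *+ (b i + b j))
     * (\prod_(k | (k != i) && (k != j)) Y k ^+ b k) ^+ 2) *+ (\sum_k b k).
Proof.
move=> ij; have ji : j != i by rewrite eq_sym.
rewrite /amgm_gap !sum_merge_weight //; set m := (\sum_k b k)%N.
set Rest := \sum_(k | (k != i) && (k != j)) (Y k ^+ m) ^+ 2 *+ b k.
set Rt := \prod_(k | (k != i) && (k != j)) Y k ^+ b k.
have eS c : (forall k, k != i -> k != j -> c k = b k) ->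
    \sum_k (Y k ^+ m) ^+ 2 *+ c k = (Y i ^+ m) ^+ 2 *+ c i + (Y j ^+ m) ^+ 2 *+ c j + Rest.
  move=> cb; rewrite (big_off2 (G := fun k => (Y k ^+ m) ^+ 2 *+ b k) _ ij) // => k ki kj.
  by rewrite cb.
have eP c : (forall k, k != i -> k != j -> c k = b k) ->
    \prod_k Y k ^+ c k = Y i ^+ c i * Y j ^+ c j * Rt.
  by move=> cb; rewrite (big_off2 (G := fun k => Y k ^+ b k) _ ij) // => k ki kj; rewrite cb.
have off1 := @merge_weight_off b i j; have off2 k ki kj := @merge_weight_off b j i k kj ki.
rewrite (eS b) // (eS _ off1) (eS _ off2) (eP b) // (eP _ off1) (eP _ off2).
rewrite merge_weight_i // merge_weight_j // merge_weight_i // merge_weight_j // addnC.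
by ring.
Qed.

Lemma SOBS_amgm_gap (Y : 'I_n -> P) b : (forall i, monomial (Y i)) -> SOBS (amgm_gap Y b).
Proof.
move=> mY; move: {2}#|supp b| (leqnn #|supp b|) => N; elim: N b => [|N IH] b hN.
  by rewrite amgm_gap_supp_le1 ?(leq_trans hN) //; exact: SOBS0.
have [le1|gt1] := leqP #|supp b| 1; first by rewrite amgm_gap_supp_le1 //; exact: SOBS0.
have [i iS] : exists i, i \in supp b by apply/card_gt0P; apply: leq_trans gt1.
have [j jS] : exists j, j \in supp b :\ i.
  by apply/card_gt0P; move: gt1; rewrite (cardsD1 i) iS.
move: (jS); rewrite !inE => /andP[ji bj0]; move: (iS); rewrite inE => bi0.
have ij : i != j by rewrite eq_sym.
apply: (@SOBS_Mn_inv _ (b i + b j)); first by rewrite addn_gt0 lt0n bi0.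
rewrite amgm_gap_merge //; apply: SOBSD; first apply: SOBSD; apply: SOBSMn.
- apply: IH; rewrite supp_merge_weight //.
  by move: hN; rewrite (cardsD1 j) inE bj0 ltnS.
- apply: IH; rewrite supp_merge_weight //.
  by move: hN; rewrite (cardsD1 i) iS ltnS.
- apply: SOBSM_sqr; first by apply: monomial_prod => k; apply: monomialX.
  by have := SOBS_amgm2 (mY i) (mY j) (leq_addr (b j) (b i)); rewrite addKn.
Qed.

Lemma exists_sub_weight (b : 'I_n -> nat) k : (k <= \sum_i b i)%N ->
  exists2 g : 'I_n -> nat, forall i, (g i <= b i)%N & (\sum_i g i)%N = k.
Proof.
elim: k => [|k IH] hk; first by exists (fun _ => 0%N) => //; rewrite big1.
have [g gb sg] := IH (ltnW hk).
case: (pickP (fun i => g i < b i)%N) => [i /= gi|none].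
  exists (fun l => if l == i then (g i).+1 else g l) => [l|].
    by case: eqP => [->|_]; [exact: gi | exact: gb].
  rewrite (bigD1 i) //= eqxx -sg [in RHS](bigD1 i) //= addSn.
  by congr (_ + _).+1; apply: eq_bigr => l /negbTE->.
have : (\sum_i b i <= \sum_i g i)%N.
  by apply: leq_sum => i _; move/negbT: (none i); rewrite -leqNgt.
by rewrite sg leqNgt hk.
Qed.

Lemma SOBS_amgm (Y : 'I_n -> P) (al : 'I_n -> nat) d :
  (forall i, monomial (Y i)) -> (\sum_i al i)%N = (2 * d)%N ->
  SOBS (\sum_i Y i ^+ (2 * d) *+ al i - (\prod_i Y i ^+ al i) *+ (2 * d)).
Proof.
move=> mY sal.
have [g ga sg] : exists2 g : 'I_n -> nat, forall i, (g i <= al i)%N & (\sum_i g i)%N = d.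
  by apply: exists_sub_weight; rewrite sal; lia.
pose g' i := (al i - g i)%N.
have alE i : al i = (g i + g' i)%N by rewrite subnKC.
have sg' : (\sum_i g' i)%N = d.
  have : (\sum_i al i = \sum_i g i + \sum_i g' i)%N.
    by rewrite -big_split; apply: eq_bigr => i _; rewrite alE.
  by rewrite sal sg; lia.
have -> : \sum_i Y i ^+ (2 * d) *+ al i - (\prod_i Y i ^+ al i) *+ (2 * d) =
    amgm_gap Y g + amgm_gap Y g' + (\prod_i Y i ^+ g i - \prod_i Y i ^+ g' i) ^+ 2 *+ d.
  rewrite /amgm_gap sg sg'.
  have -> : \sum_i Y i ^+ (2 * d) *+ al i =
      \sum_i (Y i ^+ d) ^+ 2 *+ g i + \sum_i (Y i ^+ d) ^+ 2 *+ g' i.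
    by rewrite -big_split; apply: eq_bigr => i _; rewrite alE mulrnDr -exprM mulnC.
  have -> : \prod_i Y i ^+ al i = (\prod_i Y i ^+ g i) * (\prod_i Y i ^+ g' i).
    by rewrite -big_split; apply: eq_bigr => i _; rewrite alE exprD.
  by ring.
have mprod h : monomial (\prod_i Y i ^+ h i) by apply: monomial_prod => i; apply: monomialX.
apply: SOBSD; first by apply: SOBSD; apply: SOBS_amgm_gap.
by apply: SOBSMn; apply: SOBS_sqrB; apply: mprod.
Qed.

Lemma mnm_powE (i : 'I_n) k : 'X_[mnm_pow i k] = ('X_i : P) ^+ k.
Proof.
rewrite mpolyXn; congr 'X_[_]; apply/mnmP => j.
by rewrite mulmnE mnm1E mnmE eq_sym; case: eqP; rewrite ?mul1n ?mul0n.
Qed.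

Lemma SOBS_sum_pow2 (w : 'I_n -> R) d : (forall i, 0 <= w i) ->
  SOBS (\sum_i w i *: 'X_[mnm_pow i (2 * d)] : P).
Proof.
move=> w0; apply: SOBS_sum => i _; apply: SOBSZX_even => // j.
by rewrite /mnm_pow mnmE; case: ifP; rewrite ?oddM.
Qed.

Lemma exists_sign_twist (c : R) (al : 'X_{1..n}) :
  ~~ ((0 < c) && [forall i, ~~ odd (al i)]) ->
  exists2 s : 'I_n -> R, forall i, s i ^+ 2 = 1 & c * \prod_i s i ^+ al i = - `|c|.
Proof.
move=> twist; have [c_le0|c_gt0] := lerP c 0.
  exists (fun _ => 1) => [i|]; first by rewrite expr1n.
  by rewrite big1 ?mulr1 ?ler0_norm ?opprK // => i _; rewrite expr1n.
have [k odd_k] : exists k, odd (al k).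
  by move: twist; rewrite c_gt0 negb_forall => /existsP[k]; rewrite negbK; exists k.
exists (fun i => if i == k then -1 else 1) => [i|].
  by case: eqP; rewrite ?sqrrN expr1n.
rewrite (bigD1 k) //= eqxx big1 ?mulr1 => [|i /negbTE->]; last by rewrite expr1n.
by rewrite -signr_odd odd_k expr1 gtr0_norm // mulrN1.
Qed.

(* Rescaling [X_i] by [r i] turns [c X^al + sum_i a_i X_i^k] into a multiple of
   an AM-GM form; the balancing hypothesis is what makes [prod_i r_i^al_i = 1]. *)
Lemma exists_amgm_scaling (al : 'X_{1..n}) (c : R) (a : 'I_n -> R) k :
  (0 < k)%N -> mdeg al = k -> 0 < c -> (forall i, 0 <= a i) ->
  k%:R ^+ k * vpow a al = c ^+ k * mnm_selfpow R al ->
  exists2 r : 'I_n -> R, \prod_i r i ^+ al i = 1 &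
    forall i, al i != 0%N -> (al i)%:R * c * r i ^+ k = k%:R * a i.
Proof.
move=> k_gt0 deg_al c_gt0 a_ge0 balance; have c_neq0 : c != 0 by rewrite gt_eqF.
pose q i := if al i == 0%N then 1 else k%:R * a i / ((al i)%:R * c).
have q_ge0 i : 0 <= q i.
  by rewrite /q; case: ifP => // _; rewrite divr_ge0 ?mulr_ge0 ?ler0n ?a_ge0 ?(ltW c_gt0).
have [r /all_and2[r_ge0 rq]] : exists r : 'I_n -> R, forall i, 0 <= r i /\ r i ^+ k = q i.
  apply: (@fin_all_exists _ _ (fun i y => 0 <= y /\ y ^+ k = q i)) => i.
  by have [y] := exists_root (q_ge0 i) k_gt0; exists y.
exists r => [|i al_i]; last first.
  by rewrite rq /q (negbTE al_i) mulrC divfK // mulf_neq0 ?pnatr_eq0.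
have sum_al : (\sum_i al i)%N = k by rewrite -mdegE.
have selfpow_neq0 : mnm_selfpow R al != 0.
  apply/prodf_neq0 => i _; case: (posnP (al i)) => [->|p]; first by rewrite oner_eq0.
  by rewrite expf_neq0 // pnatr_eq0 -lt0n.
have q1 : \prod_i q i ^+ al i = 1.
  apply: (mulIf (mulf_neq0 selfpow_neq0 (expf_neq0 k c_neq0))).
  have prodX (x : R) : \prod_i x ^+ al i = x ^+ k by rewrite prodrXr sum_al.
  rewrite mul1r [RHS]mulrC -balance /mnm_selfpow /vpow -!prodX.
  rewrite -!big_split /=; apply: eq_bigr => i _; rewrite /q; case: eqP => [->|al_i].
    by rewrite !expr0 !mul1r.
  by rewrite -!exprMn divfK // mulf_neq0 // pnatr_eq0; apply/eqP.
have prod_r_ge0 : 0 <= \prod_i r i ^+ al i by apply: prodr_ge0 => i _; rewrite exprn_ge0.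
apply/eqP; rewrite -(pexpr_eq1 k_gt0 prod_r_ge0); apply/eqP.
by rewrite -prodrXl -[RHS]q1; apply: eq_bigr => i _; rewrite exprAC rq.
Qed.

Lemma SOBS_agiform d (al : 'X_{1..n}) (c : R) (a : 'I_n -> R) :
  (0 < d)%N -> mdeg al = (2 * d)%N -> (forall i, 0 <= a i) ->
  (2 * d)%:R ^+ (2 * d) * vpow a al = c ^+ (2 * d) * mnm_selfpow R al ->
  SOBS (c *: 'X_[al] + \sum_i a i *: 'X_[mnm_pow i (2 * d)] : P).
Proof.
move=> d_gt0 deg_al a_ge0 balance.
have [/andP[c_gt0 /forallP ev]|twist] := boolP ((0 < c) && [forall i, ~~ odd (al i)]).
  by apply: SOBSD; [apply: SOBSZX_even; rewrite ?ltW | apply: SOBS_sum_pow2].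
have [->|c_neq0] := eqVneq c 0; first by rewrite scale0r add0r; apply: SOBS_sum_pow2.
have [s s2 sc] := exists_sign_twist twist.
have d2_neq0 : ((2 * d)%:R : R) != 0 by rewrite pnatr_eq0; lia.
have [r r1 ra] : exists2 r : 'I_n -> R, \prod_i r i ^+ al i = 1 &
    forall i, al i != 0%N -> (al i)%:R * `|c| * r i ^+ (2 * d) = (2 * d)%:R * a i.
  apply: exists_amgm_scaling => //.
  - by lia.
  - by rewrite normr_gt0.
  - by rewrite balance !exprM real_normK // num_real.
pose Y i := (s i * r i) *: ('X_i : P).
have mY i : monomial (Y i) by exact: monomialZX.
have YX i : Y i ^+ (2 * d) = r i ^+ (2 * d) *: 'X_[mnm_pow i (2 * d)].
  by rewrite exprZn exprMn exprM s2 expr1n mul1r mnm_powE.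
pose sg := \prod_i s i ^+ al i.
have prodY : \prod_i Y i ^+ al i = sg *: 'X_[al].
  rewrite /Y; under eq_bigr do rewrite exprZn exprMn; rewrite scaler_prod.
  by rewrite big_split /= r1 mulr1 -mpolyXE_id.
have := SOBS_amgm mY (etrans (esym (mdegE al)) deg_al).
rewrite prodY; under eq_bigr do rewrite YX; move=> amgm.
pose w := `|c| / (2 * d)%:R.
have a_split i : a i = w * ((al i)%:R * r i ^+ (2 * d)) + (if al i == 0%N then a i else 0).
  case: eqP => [->|/eqP al_i]; first by rewrite mul0r mulr0 add0r.
  rewrite addr0; apply: (mulfI d2_neq0); rewrite -ra // /w.
  by field; rewrite pnatr_eq0 -lt0n.
have c_split : c = - (w * (2 * d)%:R * sg).
  have sg2 : sg ^+ 2 = 1 by rewrite -prodrXl; apply: big1 => i _; rewrite exprAC s2 expr1n.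
  by rewrite /w divfK // -{1}[c]mulr1 -sg2 expr2 mulrA sc mulNr.
have -> : c *: 'X_[al] + \sum_i a i *: 'X_[mnm_pow i (2 * d)] =
    w *: (\sum_i (r i ^+ (2 * d) *: 'X_[mnm_pow i (2 * d)]) *+ al i
          - (sg *: 'X_[al]) *+ (2 * d))
    + \sum_i (if al i == 0%N then a i else 0) *: 'X_[mnm_pow i (2 * d)].
  rewrite scalerBr scaler_sumr -!scaler_nat !scalerA {1}c_split scaleNr addrAC -big_split /=.
  rewrite addrC mulrA; congr (_ + _); apply: eq_bigr => i _.
  by rewrite -scaler_nat !scalerA -scalerDl -a_split.
apply: SOBSD; first by apply: SOBSZ; rewrite ?divr_ge0.
by apply: SOBS_sum_pow2 => i; case: eqP.
Qed.

Lemma mnm_pow_inj k : (0 < k)%N -> injective (fun i : 'I_n => mnm_pow i k).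
Proof.
move=> k_gt0 i j /mnmP/(_ i); rewrite !mnmE eqxx.
by case: eqP => // _ k0; move: k_gt0; rewrite k0.
Qed.

Lemma mcoeff_sumX_uniq (s : seq 'X_{1..n}) (c : 'X_{1..n} -> R) m : uniq s ->
  (\sum_(u <- s) c u *: 'X_[u] : P)@_m = if m \in s then c m else 0.
Proof.
move=> s_uniq; rewrite raddf_sum /=; under eq_bigr do rewrite mcoeffZ mcoeffX.
case: ifP => ms; last first.
  rewrite big_seq big1 // => u us; case: eqP => [um|]; last by rewrite mulr0.
  by rewrite -um us in ms.
rewrite (bigD1_seq m) //= eqxx mulr1 big1 ?addr0 // => u /negbTE->.
by rewrite mulr0.
Qed.

Lemma SOBS_homog0 (f : P) : f \is 0.-homog -> 0 <= f@_0 -> SOBS f.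
Proof.
move=> hom f0_ge0; have -> : f = f@_0 *: 'X_[0].
  apply/mpolyP => m; rewrite mcoeffZ mcoeffX.
  have [<-|m_neq0] := eqVneq 0%MM m; first by rewrite mulr1.
  by rewrite mulr0 (dhomog_nemf_coeff hom) // mdeg_eq0 eq_sym.
by apply: SOBSZX_even => // i; rewrite mnm0E.
Qed.

(* Outside Delta and the pure powers, the monomials of [f] are even with
   nonnegative coefficients. *)
Lemma SOBS_Delta_rest (f : P) d : (0 < d)%N -> f \is (2 * d)%N.-homog ->
  SOBS (f - \sum_(u <- Delta f d ++ [seq mnm_pow i (2 * d) | i <- enum 'I_n]) f@_u *: 'X_[u]).
Proof.
move=> d_gt0 hom; set V := [seq mnm_pow i (2 * d) | i <- enum 'I_n].
have Omega_pow u : in_Omega f d u -> u \notin V.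
  case/and3P=> _ _ /forallP u_pow; apply/mapP => -[i _ ui].
  by move: (u_pow i); rewrite ui eqxx.
have DV_uniq : uniq (Delta f d ++ V).
  rewrite cat_uniq filter_uniq ?msupp_uniq //= map_inj_uniq ?enum_uniq ?andbT.
    apply/hasPn => u uV; rewrite mem_filter.
    by apply: contraL uV => /andP[/andP[/Omega_pow]].
  by apply: mnm_pow_inj; lia.
set g := f - _; rewrite (mpolyE g); apply: SOBS_sum => m _.
rewrite mcoeffB mcoeff_sumX_uniq // mem_cat.
have [_|] := boolP ((m \in Delta f d) || (m \in V)).
  by rewrite subrr scale0r; exact: SOBS0.
rewrite negb_or mem_filter subr0 => /andP[not_Delta not_V].
have [->|fm_neq0] := eqVneq f@_m 0; first by rewrite scale0r; exact: SOBS0.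
have m_Omega : in_Omega f d m.
  rewrite /in_Omega fm_neq0 /=; apply/andP; split.
    by apply: contraNneq fm_neq0 => ->; rewrite (dhomog_nemf_coeff hom) //= mdeg0; lia.
  by apply/forallP => i; apply: contraNneq not_V => ->; apply: map_f; rewrite mem_enum.
move: not_Delta; rewrite m_Omega mcoeff_msupp fm_neq0 andbT negb_or.
case/andP=> fm_ge0 /existsPn even.
by apply: SOBSZX_even; rewrite // leNgt.
Qed.

End SOBS.

Theorem theorem2p3 (R : realType) (n d : nat) (f : {mpoly R[n]})
  (a : 'X_{1..n} -> 'I_n -> R) :
  (0 < n)%N ->
  f \is (2 * d)%N.-homog ->
  (forall alpha, alpha \in Delta f d -> forall i, 0 <= a alpha i) ->
  (forall alpha, alpha \in Delta f d ->
     ((2 * d)%:R ^+ (2 * d) * vpow (a alpha) alpha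
      = f@_alpha ^+ (2 * d) * mnm_selfpow R alpha)) ->
  (forall i : 'I_n, \sum_(alpha <- Delta f d) a alpha i <= f@_(mnm_pow i (2 * d))) ->
  SOBS f.
Proof.
move=> n_gt0 hom a_ge0 balance a_sum.
have [d0|d_gt0] := posnP d.
  pose i0 : 'I_n := Ordinal n_gt0.
  apply: SOBS_homog0; first by rewrite d0 in hom.
  have -> : 0%MM = mnm_pow i0 (2 * d) by apply/mnmP => j; rewrite mnm0E mnmE d0; case: ifP.
  by apply: le_trans (a_sum i0); rewrite big_seq sumr_ge0 // => u /a_ge0.
set D := Delta f d; set v := fun i : 'I_n => mnm_pow i (2 * d).
pose agiform u := f@_u *: 'X_[u] + \sum_i a u i *: 'X_[v i].
pose slack := \sum_i (f@_(v i) - \sum_(u <- D) a u i) *: 'X_[v i].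
have -> : f = (f - \sum_(u <- D ++ [seq v i | i <- enum 'I_n]) f@_u *: 'X_[u])
              + \sum_(u <- D) agiform u + slack.
  rewrite big_cat /= big_map big_enum /= big_split /= exchange_big /= /slack.
  under [X in _ = _ + X]eq_bigr do rewrite scalerBl scaler_suml.
  by rewrite sumrB; ring.
apply: SOBSD; first apply: SOBSD.
- exact: SOBS_Delta_rest.
- rewrite big_seq; apply: SOBS_sum => u uD.
  apply: (SOBS_agiform d_gt0 _ (a_ge0 u uD) (balance u uD)).
  by move: uD; rewrite mem_filter => /andP[_]; apply: dhomog_mf.
- by apply: SOBS_sum_pow2 => i; rewrite subr_ge0.
Qed.
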